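(* Let $F$ be a field of characteristic $0$ and $k$ a positive integer. Then each of the following graded polynomials is a $\mathbb{Z}$-graded identity of $E^k$ (so the $T_{\mathbb{Z}}$-ideal $P^k$ they generate satisfies $P^k\subseteq T_{\mathbb{Z}}(E^k)$): (1) $x$ whenever $\alpha(x)<0$; (2) $[x_1,x_2,x_3]$ for every choice of the degrees; (3) if $k$ is even: $[y_1,y_2]\cdots[y_{k-1},y_k][y_{k+1},x]$ with $x$ of arbitrary degree; (4) if $k$ is odd: $[y_1,y_2]\cdots[y_{k-2},y_{k-1}][y_k,y_{k+1}]$; (5) for even $l\le k$: $g_{k-l+2}(z_1,\dots,z_{k-l+2})[u_1,u_2]\cdots[u_{l-1},u_l]$; (6) for odd $l\le k$: $[g_{k-l+2}(z_1,\dots,z_{k-l+2}),u_1][u_2,u_3]\cdots[u_{l-1},u_l]$; (7) for odd $l\le k$: $g_{k-l+2}(z_1,\dots,z_{k-l+2})[z_{k-l+3},u_1][u_2,u_3]\cdots[u_{l-1},u_l]$; where in (5)–(7) all $z_i$ have positive odd degree and all $u_i$ have even degree (each $u_i$ being either a degree-$0$ variable $y$ or a variable $z$ of positive even degree).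
   Context: $L$ is a vector space over $F$ with basis $e_1,e_2,\dots$, $E$ its unital Grassmann algebra (basis $1$ and $e_{i_1}\cdots e_{i_k}$, $i_1<\cdots<i_k$, with $e_ie_j=-e_je_i$). $E^k$ is $E$ with the $\mathbb{Z}$-grading induced by $\|e_i\|=0$ for $1\le i\le k$ and $\|e_i\|=1$ for $i\ge k+1$ (basis monomials get the sum of degrees of their factors; $1$ has degree $0$). Graded polynomials live in the free unital associative algebra on countably many variables of each integer degree, $\alpha(x)$ denoting the degree; the letters $y,y_i$ denote variables of degree $0$. A polynomial is a graded identity of a $\mathbb{Z}$-graded algebra $A$ if it vanishes under every substitution of each variable $x$ by an element of $A_{\alpha(x)}$. $[a,b]=ab-ba$, $[a,b,c]=[[a,b],c]$. Define $g_1(z_1)=z_1$ and, for $m\ge2$, $g_m(z_1,\dots,z_m)=\sum_T(-2)^{-|T|/2}f_T$, the sum over all subsets $T\subseteq\{1,\dots,m\}$ with $|T|$ even, where for $T=\{j_1<\cdots<j_t\}$ and $\{1,\dots,m\}\setminus T=\{i_1<\cdots<i_r\}$ one sets $f_T=z_{i_1}\cdots z_{i_r}[z_{j_1},z_{j_2}]\cdots[z_{j_{t-1}},z_{j_t}]$. *)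

From mathcomp Require Import all_boot all_order all_algebra.
Set Implicit Arguments. Unset Strict Implicit. Unset Printing Implicit Defensive.
Import Order.TTheory GRing.Theory Num.Theory.
Local Open Scope ring_scope.

(* Concrete model of the unital Grassmann algebra E over F on generators
   e_1, e_2, ...  The generator e_(i+1) is encoded by the natural number i.
   An element of E is presented as a finite formal linear combination of
   words in the generators: a list of (coefficient, word).  Two presentations
   denote the same element of E iff they have the same coordinates
   [Ecoef] on the standard basis 1, e_{i_1}...e_{i_r} (i_1<...<i_r), the
   basis monomial being encoded by the strictly increasing list of indices.
   A word w evaluates in E to 0 if it has a repeated letter, and otherwise to
   (-1)^(number of inversions of w) times the basis monomial [sort w]. *)

Section Grassmann.
Variable F : fieldType.

Definition Eexpr := seq (F * seq nat).

Fixpoint inversions (w : seq nat) : nat :=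
  if w is x :: s then (count (fun y => y < x)%N s + inversions s)%N else 0%N.

Definition wsign (w : seq nat) : F :=
  if uniq w then (-1) ^+ inversions w else 0.

Definition Ecoef (a : Eexpr) (s : seq nat) : F :=
  \sum_(p <- a) p.1 * wsign p.2 * (sort leq p.2 == s)%:R.

Definition Ezero (a : Eexpr) : Prop := forall s, Ecoef a s = 0.

Definition Eone : Eexpr := [:: (1, [::])].
Definition Eadd (a b : Eexpr) : Eexpr := a ++ b.
Definition Escale (c : F) (a : Eexpr) : Eexpr := [seq (c * p.1, p.2) | p <- a].
Definition Esub (a b : Eexpr) : Eexpr := a ++ Escale (-1) b.
Definition Emul (a b : Eexpr) : Eexpr :=
  [seq (p.1 * q.1, p.2 ++ q.2) | p <- a, q <- b].
Definition Eprod (l : seq Eexpr) : Eexpr := foldr Emul Eone l.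
Definition Esum (l : seq Eexpr) : Eexpr := flatten l.

Definition Ecomm (a b : Eexpr) : Eexpr := Esub (Emul a b) (Emul b a).

(* Z-grading of E^k: ||e_i|| = 0 for 1 <= i <= k (indices 0..k-1 here),
   ||e_i|| = 1 for i >= k+1 (indices >= k here). *)
Definition mdeg (k : nat) (s : seq nat) : nat := count (fun i => k <= i)%N s.

Definition Ehomog (k : nat) (d : int) (a : Eexpr) : Prop :=
  forall s, Ecoef a s != 0 -> (mdeg k s)%:Z = d.

Definition comm_prod (v : nat -> Eexpr) (n : nat) : Eexpr :=
  Eprod [seq Ecomm (v (2 * i)%N) (v (2 * i).+1) | i <- iota 0 n].

Fixpoint pairup (s : seq nat) : seq (nat * nat) :=
  match s with
  | x :: y :: t => (x, y) :: pairup t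
  | _ => [::]
  end.

(* f_T(z_1..z_m) with z_(i+1) encoded as z i, T a subset of {0..m-1} *)
Definition fT (m : nat) (T : {set 'I_m}) (z : nat -> Eexpr) : Eexpr :=
  let Tl := [seq val i | i <- enum 'I_m & i \in T] in
  let Rl := [seq val i | i <- enum 'I_m & i \notin T] in
  Emul (Eprod [seq z i | i <- Rl])
       (Eprod [seq Ecomm (z p.1) (z p.2) | p <- pairup Tl]).

Definition gpoly (m : nat) (z : nat -> Eexpr) : Eexpr :=
  if m == 1%N then z 0%N else
  Esum [seq Escale (((-2 : F) ^+ (#|T| %/ 2))^-1) (fT T z)
       | T : {set 'I_m} <- enum [set: {set 'I_m}] & ~~ odd #|T|].

End Grassmann.

From mathcomp Require Import all_boot all_order all_algebra.
From mathcomp Require Import zify ring.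
Set Implicit Arguments. Unset Strict Implicit. Unset Printing Implicit Defensive.
Import Order.TTheory GRing.Theory Num.Theory.
Local Open Scope ring_scope.

(* Every element a of E splits into an even part, which is central, and an odd
   part a_1; hence [a,b] = 2 a_1 b_1 is central, which gives [x1,x2,x3] = 0.
   The length of a basis monomial of E^k is its degree plus its number of
   degree-0 generators e_1, ..., e_k, so the odd part of an element of even
   degree, and the even part of an element of odd degree, involve at least one
   degree-0 generator in each monomial.  Expanding g_m(z_1,...,z_m) along the
   even and odd parts of the z_i, all terms with two or more odd parts cancel,
   so for z_i of odd degree every monomial of g_m contains at least m - 1
   degree-0 generators.  In each of (3)-(7) this count adds up to at least
   k + 1 degree-0 generators per monomial, more than E^k has. *)

Definition cross_inv (p q : seq nat) : nat :=
  (\sum_(x <- p) count (fun y => y < x) q)%N.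

Lemma inversions_cat p q :
  inversions (p ++ q) = (inversions p + inversions q + cross_inv p q)%N.
Proof.
elim: p => [|x p IHp] /=; first by rewrite /cross_inv big_nil addn0.
by rewrite IHp /cross_inv big_cons count_cat; lia.
Qed.

Lemma inversions_sort p : inversions (sort leq p) = 0%N.
Proof.
elim: (sort leq p) (sort_sorted leq_total p) => [|x s IHs] //= s_sorted.
rewrite IHs ?(path_sorted s_sorted) // addn0.
apply/eqP; rewrite -leqn0 leqNgt -has_count; apply/hasPn => y y_s; rewrite -leqNgt.
exact: (allP (order_path_min leq_trans s_sorted)).
Qed.

Lemma cross_inv_perml p p' q : perm_eq p p' -> cross_inv p q = cross_inv p' q.
Proof. by move=> pp'; rewrite /cross_inv (perm_big _ pp'). Qed.

Lemma cross_inv_permr p q q' : perm_eq q q' -> cross_inv p q = cross_inv p q'.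
Proof. by move=> /permP qq'; apply: eq_bigr => x _; rewrite qq'. Qed.

Lemma count_lt_gt_notin x q : x \notin q ->
  (count (fun y => y < x) q + count (fun y => x < y) q)%N = size q.
Proof.
elim: q => [|y q IHq] //=; rewrite inE negb_or => /andP [xy xq].
by rewrite -(IHq xq); move: xy; case: (ltngtP y x) => //= _ _; lia.
Qed.

Lemma cross_invC p q :
  uniq (p ++ q) -> (cross_inv p q + cross_inv q p = size p * size q)%N.
Proof.
elim: p => [|x p IHp] /=; first by rewrite /cross_inv big_nil big1.
rewrite mem_cat negb_or => /andP [/andP [_ xq] pq_uniq].
have cross_cons : cross_inv q (x :: p) = (count (fun y => x < y) q + cross_inv q p)%N.
  rewrite /cross_inv; elim: q {xq pq_uniq IHp} => [|y q IHq]; first by rewrite !big_nil.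
  by rewrite !big_cons /= IHq; lia.
rewrite cross_cons /cross_inv big_cons -/(cross_inv p q) -/(cross_inv q p) mulSn.
by rewrite addnACA count_lt_gt_notin // IHp.
Qed.

Lemma sort_perm p q : perm_eq p q -> sort leq p = sort leq q.
Proof. exact/perm_sortP/anti_leq/leq_trans/leq_total. Qed.

Lemma sort_cat_sortl p q : sort leq (sort leq p ++ q) = sort leq (p ++ q).
Proof. by apply: sort_perm; rewrite perm_cat2r perm_sort. Qed.

Lemma sort_cat_sortr p q : sort leq (p ++ sort leq q) = sort leq (p ++ q).
Proof. by apply: sort_perm; rewrite perm_cat2l perm_sort. Qed.

Lemma sort_catC p q : sort leq (q ++ p) = sort leq (p ++ q).
Proof. by apply: sort_perm; rewrite perm_catC. Qed.

Section WordSign.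
Variable F : fieldType.

Lemma wsign_cat_sortl p q : wsign F (p ++ q) = wsign F p * wsign F (sort leq p ++ q).
Proof.
rewrite /wsign; have -> : uniq (sort leq p ++ q) = uniq (p ++ q).
  by apply: perm_uniq; rewrite perm_cat2r perm_sort.
case pq_uniq: (uniq (p ++ q)); last by rewrite mulr0.
move: pq_uniq; rewrite cat_uniq => /andP [-> _].
rewrite !inversions_cat inversions_sort add0n -exprD addnA.
by rewrite (cross_inv_perml _ (permEl (perm_sort leq p))).
Qed.

Lemma wsign_cat_sortr p q : wsign F (p ++ q) = wsign F q * wsign F (p ++ sort leq q).
Proof.
rewrite /wsign; have -> : uniq (p ++ sort leq q) = uniq (p ++ q).
  by apply: perm_uniq; rewrite perm_cat2l perm_sort.
case pq_uniq: (uniq (p ++ q)); last by rewrite mulr0.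
move: pq_uniq; rewrite cat_uniq => /and3P [_ _ ->].
rewrite !inversions_cat inversions_sort addn0 -exprD addnCA addnA.
by rewrite (cross_inv_permr _ (permEl (perm_sort leq q))).
Qed.

Lemma wsign_catC p q :
  wsign F (q ++ p) = (-1) ^+ (size p * size q) * wsign F (p ++ q).
Proof.
rewrite /wsign uniq_catC; case pq_uniq: (uniq (p ++ q)); last by rewrite mulr0.
rewrite !inversions_cat -exprD -(cross_invC pq_uniq) -signr_odd -[RHS]signr_odd.
congr (_ ^+ _); rewrite !oddD.
by case: (odd (inversions p)) (odd (inversions q)) (odd (cross_inv p q)) (odd (cross_inv q p))
  => [] [] [] [].
Qed.

Lemma wsign_sort w : wsign F (sort leq w) = (uniq w)%:R.
Proof. by rewrite /wsign sort_uniq inversions_sort expr0; case: (uniq w). Qed.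

End WordSign.

Notation "a =E b" := (forall s, Ecoef a s = Ecoef b s) (at level 70, no associativity).

Lemma sum_pred1_seq (T : eqType) (R : nzSemiRingType) (X : seq T) (u : T) (Phi : T -> R) :
  uniq X -> u \in X -> \sum_(t <- X) (u == t)%:R * Phi t = Phi u.
Proof.
move=> X_uniq uX; rewrite (bigD1_seq u) //= eqxx mul1r big1 ?addr0 // => t.
by rewrite eq_sym => /negbTE ->; rewrite mul0r.
Qed.

Section Coefficients.
Variable F : fieldType.
Implicit Types a b c : Eexpr F.

Lemma Ecoef_cat a b s : Ecoef (a ++ b) s = Ecoef a s + Ecoef b s.
Proof. by rewrite /Ecoef big_cat. Qed.

Lemma Ecoef_nil s : Ecoef ([::] : Eexpr F) s = 0.
Proof. by rewrite /Ecoef big_nil. Qed.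

Lemma Ecoef_scale x a s : Ecoef (Escale x a) s = x * Ecoef a s.
Proof.
by rewrite /Ecoef big_map big_distrr; apply: eq_bigr => p _ /=; rewrite !mulrA.
Qed.

Lemma Ecoef_sub a b s : Ecoef (Esub a b) s = Ecoef a s - Ecoef b s.
Proof. by rewrite /Esub Ecoef_cat Ecoef_scale mulN1r. Qed.

Lemma Ecoef_Emul a b s : Ecoef (Emul a b) s =
  \sum_(p <- a) \sum_(q <- b)
     p.1 * q.1 * wsign F (p.2 ++ q.2) * (sort leq (p.2 ++ q.2) == s)%:R.
Proof. by rewrite /Ecoef /Emul big_allpairs_dep. Qed.

Lemma Ecoef_Ecomm a b s :
  Ecoef (Ecomm a b) s = Ecoef (Emul a b) s - Ecoef (Emul b a) s.
Proof. exact: Ecoef_sub. Qed.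

Lemma Ecoef_Esum (L : seq (Eexpr F)) s : Ecoef (Esum L) s = \sum_(x <- L) Ecoef x s.
Proof. by rewrite /Ecoef /Esum big_flatten. Qed.

(* Regroups the words of [a] by the basis monomial [sort leq w] they evaluate to. *)
Lemma sum_by_monomials a (Phi : seq nat -> F) (X : seq (seq nat)) :
  uniq X -> {in a, forall p, sort leq p.2 \in X} ->
  \sum_(p <- a) p.1 * wsign F p.2 * Phi (sort leq p.2) =
  \sum_(t <- X) Ecoef a t * Phi t.
Proof.
move=> X_uniq aX; under [RHS]eq_bigr do rewrite /Ecoef big_distrl.
rewrite exchange_big /=; apply: eq_big_seq => p pa.
by under eq_bigr do rewrite -mulrA; rewrite -big_distrr /= sum_pred1_seq ?aX.
Qed.

Lemma eq_sum_by_monomials a a' (Phi : seq nat -> F) : a =E a' ->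
  \sum_(p <- a) p.1 * wsign F p.2 * Phi (sort leq p.2) =
  \sum_(p <- a') p.1 * wsign F p.2 * Phi (sort leq p.2).
Proof.
move=> aa'; set X := undup [seq sort leq p.2 | p <- a ++ a'].
have inX c : {subset c <= a ++ a'} -> {in c, forall p, sort leq p.2 \in X}.
  by move=> ca p pc; rewrite mem_undup; apply/mapP; exists p; rewrite ?ca.
rewrite (sum_by_monomials Phi (undup_uniq _) (inX a _)) => [|p]; last first.
  by rewrite mem_cat => ->.
rewrite (sum_by_monomials Phi (undup_uniq _) (inX a' _)) => [|p]; last first.
  by rewrite mem_cat orbC => ->.
by apply: eq_bigr => t _; rewrite aa'.
Qed.

Lemma Ecoef_Emul_sortl a b s : Ecoef (Emul a b) s =
  \sum_(p <- a) p.1 * wsign F p.2 * Ecoef (Emul [:: (1, sort leq p.2)] b) s.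
Proof.
rewrite Ecoef_Emul; apply: eq_bigr => p _.
rewrite Ecoef_Emul big_seq1 big_distrr; apply: eq_bigr => q _ /=.
rewrite wsign_cat_sortl sort_cat_sortl; ring.
Qed.

Lemma Ecoef_Emul_sortr a b s : Ecoef (Emul a b) s =
  \sum_(q <- b) q.1 * wsign F q.2 * Ecoef (Emul a [:: (1, sort leq q.2)]) s.
Proof.
rewrite Ecoef_Emul exchange_big; apply: eq_bigr => q _.
rewrite Ecoef_Emul big_distrr; apply: eq_bigr => p _ /=.
by rewrite big_seq1 /= wsign_cat_sortr sort_cat_sortr; ring.
Qed.

Lemma Emul_eql a a' b : a =E a' -> Emul a b =E Emul a' b.
Proof.
move=> aa' s; rewrite !Ecoef_Emul_sortl.
exact: (eq_sum_by_monomials (fun t => Ecoef (Emul [:: (1, t)] b) s) aa').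
Qed.

Lemma Emul_eqr a b b' : b =E b' -> Emul a b =E Emul a b'.
Proof.
move=> bb' s; rewrite !Ecoef_Emul_sortr.
exact: (eq_sum_by_monomials (fun t => Ecoef (Emul a [:: (1, t)]) s) bb').
Qed.

Lemma EmulDl a b c s :
  Ecoef (Emul (a ++ b) c) s = Ecoef (Emul a c) s + Ecoef (Emul b c) s.
Proof. by rewrite !Ecoef_Emul big_cat. Qed.

Lemma EmulDr a b c s :
  Ecoef (Emul a (b ++ c)) s = Ecoef (Emul a b) s + Ecoef (Emul a c) s.
Proof. by rewrite !Ecoef_Emul -big_split; apply: eq_bigr => p _; rewrite big_cat. Qed.

Lemma EmulZl x a b s : Ecoef (Emul (Escale x a) b) s = x * Ecoef (Emul a b) s.
Proof.
rewrite !Ecoef_Emul big_map big_distrr; apply: eq_bigr => p _ /=.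
by rewrite big_distrr; apply: eq_bigr => q _ /=; rewrite !mulrA.
Qed.

Lemma EmulZr x a b s : Ecoef (Emul a (Escale x b)) s = x * Ecoef (Emul a b) s.
Proof.
rewrite !Ecoef_Emul big_distrr; apply: eq_bigr => p _ /=.
by rewrite big_map big_distrr; apply: eq_bigr => q _ /=; ring.
Qed.

Lemma EmulA a b c : Emul (Emul a b) c =E Emul a (Emul b c).
Proof.
move=> s; rewrite !Ecoef_Emul /Emul big_allpairs_dep; apply: eq_bigr => p _.
rewrite big_allpairs_dep; apply: eq_bigr => q _.
by apply: eq_bigr => r _ /=; rewrite catA; ring.
Qed.

Lemma Emul_Esumr a (L : seq (Eexpr F)) s :
  Ecoef (Emul a (Esum L)) s = \sum_(x <- L) Ecoef (Emul a x) s.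
Proof.
elim: L => [|x L IHL]; last by rewrite big_cons -IHL /Esum /= EmulDr.
by rewrite big_nil Ecoef_Emul big1 // => p _; rewrite big_nil.
Qed.

Lemma Ecoef_Nuniq a t : ~~ uniq t -> Ecoef a t = 0.
Proof.
move=> t_Nuniq; apply: big1 => p _; case: eqP => [sort_p|_]; last by rewrite mulr0.
by rewrite /wsign -(sort_uniq leq) sort_p (negbTE t_Nuniq) mulr0 mul0r.
Qed.

Definition Esupport a := undup [seq sort leq p.2 | p <- a].

Definition Enormal a := [seq (Ecoef a t, t) | t <- Esupport a & Ecoef a t != 0].

Lemma Enormal_eq a : a =E Enormal a.
Proof.
move=> s; transitivity (\sum_(t <- Esupport a) Ecoef a t * (t == s)%:R).
  apply: (sum_by_monomials (fun t => (t == s)%:R) (undup_uniq _)) => p pa.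
  by rewrite mem_undup; apply/mapP; exists p.
rewrite [RHS]/Ecoef big_map big_filter [RHS]big_mkcond /=.
apply: eq_big_seq => _ /[!mem_undup] /mapP [p _ ->].
have [-> | coef_p] := eqVneq (Ecoef a (sort leq p.2)) 0; first by rewrite mul0r.
have p_uniq : uniq p.2.
  by apply: contraNT coef_p => /negbTE p_Nuniq; rewrite (Ecoef_Nuniq a) // sort_uniq p_Nuniq.
by rewrite /= wsign_sort p_uniq mulr1 (sorted_sort leq_trans (sort_sorted leq_total _)).
Qed.

End Coefficients.

Section Parity.
Variable F : fieldType.
Implicit Types a b c x : Eexpr F.

Definition Epart (e : bool) a := [seq p <- a | odd (size p.2) == e].

Definition Epure (e : bool) a := all (fun p : F * seq nat => odd (size p.2) == e) a.

Lemma Ecoef_Epart e a s :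
  Ecoef (Epart e a) s = if odd (size s) == e then Ecoef a s else 0.
Proof.
rewrite /Ecoef /Epart big_filter big_mkcond; case: ifP => [s_e|s_Ne].
  apply: eq_bigr => p _; case: ifP => // p_Ne.
  case: eqP => [sorted_p|_]; last by rewrite mulr0.
  by rewrite -(size_sort leq) sorted_p s_e in p_Ne.
apply: big1 => p _; case: ifP => // p_e.
case: eqP => [sorted_p|_]; last by rewrite mulr0.
by rewrite -(size_sort leq) sorted_p s_Ne in p_e.
Qed.

Lemma Epart_split a : a =E Epart false a ++ Epart true a.
Proof. by move=> s; rewrite Ecoef_cat !Ecoef_Epart; case: odd; rewrite ?addr0 ?add0r. Qed.

Lemma Epart_eq e a a' : a =E a' -> Epart e a =E Epart e a'.
Proof. by move=> aa' s; rewrite !Ecoef_Epart aa'. Qed.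

Lemma Epure_Epart e a : Epure e (Epart e a).
Proof. by apply/allP => p; rewrite mem_filter => /andP []. Qed.

Lemma Epure_Emul e1 e2 a b : Epure e1 a -> Epure e2 b -> Epure (e1 (+) e2) (Emul a b).
Proof.
move=> /allP a_e1 /allP b_e2; apply/allP => _ /allpairsPdep [p [q [pa qb ->]]] /=.
by rewrite size_cat oddD (eqP (a_e1 p pa)) (eqP (b_e2 q qb)).
Qed.

Lemma Epure_Escale e (r : F) a : Epure e a -> Epure e (Escale r a).
Proof. by rewrite /Epure all_map. Qed.

Lemma Emul_supercomm e1 e2 a b s : Epure e1 a -> Epure e2 b ->
  Ecoef (Emul a b) s = (-1) ^+ (e1 && e2) * Ecoef (Emul b a) s.
Proof.
move=> /allP a_e1 /allP b_e2.
rewrite !Ecoef_Emul exchange_big big_distrr; apply: eq_big_seq => q qb.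
rewrite big_distrr; apply: eq_big_seq => p pa /=.
rewrite wsign_catC sort_catC -signr_odd oddM (eqP (a_e1 p pa)) (eqP (b_e2 q qb)).
by rewrite [e2 && e1]andbC; case: (e1 && e2) => /=; ring.
Qed.

Lemma Emul_even_central c x : Epure false c -> Emul c x =E Emul x c.
Proof.
move=> c_even s; rewrite (Emul_eqr _ (Epart_split x)) (Emul_eql _ (Epart_split x)).
rewrite EmulDl EmulDr (Emul_supercomm s c_even (Epure_Epart false x)).
by rewrite (Emul_supercomm s c_even (Epure_Epart true x)) !mul1r.
Qed.

(* Products involving an even part commute, the odd parts anticommute. *)
Lemma Ecomm_odd_parts a b : Ecomm a b =E Escale 2 (Emul (Epart true a) (Epart true b)).
Proof.
move=> s; rewrite Ecoef_scale Ecoef_Ecomm.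
rewrite (Emul_eql _ (Epart_split a)) (Emul_eqr _ (Epart_split b)).
rewrite (Emul_eql _ (Epart_split b)) (Emul_eqr _ (Epart_split a)) !EmulDl !EmulDr.
rewrite !(Emul_supercomm s (Epure_Epart _ b) (Epure_Epart _ a)) /=.
ring.
Qed.

Lemma Ecomm_central a b x : Emul (Ecomm a b) x =E Emul x (Ecomm a b).
Proof.
move=> s; rewrite (Emul_eql _ (Ecomm_odd_parts a b)) (Emul_eqr _ (Ecomm_odd_parts a b)).
by apply/Emul_even_central/Epure_Escale/(Epure_Emul (Epure_Epart _ _) (Epure_Epart _ _)).
Qed.

Lemma Ecomm_Ecomm_Ezero a1 a2 a3 : Ezero (Ecomm (Ecomm a1 a2) a3).
Proof. by move=> s; rewrite Ecoef_Ecomm Ecomm_central subrr. Qed.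

Lemma EmulCA_even a b c : Epure false a -> Emul a (Emul b c) =E Emul b (Emul a c).
Proof. by move=> a_even s; rewrite -EmulA (Emul_eql _ (Emul_even_central b a_even)) EmulA. Qed.

Lemma EmulCA_odd a b c s : Epure true a -> Epure true b ->
  Ecoef (Emul a (Emul b c)) s = - Ecoef (Emul b (Emul a c)) s.
Proof.
move=> a_odd b_odd; rewrite -EmulA -EmulA -mulN1r -EmulZl.
apply: Emul_eql => t; rewrite Ecoef_scale (Emul_supercomm t a_odd b_odd).
by rewrite expr1.
Qed.

End Parity.

Lemma count_lt_uniq k w : uniq w -> (count (fun i => i < k) w <= k)%N.
Proof.
move=> w_uniq; rewrite -size_filter -[X in (_ <= X)%N](size_iota 0 k).
apply: uniq_leq_size; first exact: filter_uniq.
by move=> i; rewrite mem_filter mem_iota add0n /= => /andP [].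
Qed.

Section Degree0Generators.
Variables (F : fieldType) (k : nat).
Implicit Types a b : Eexpr F.

(* The degree-0 generators e_1, ..., e_k of E^k are encoded by the indices < k. *)
Definition Edeg0_ge n a := exists2 a' : Eexpr F,
  a =E a' & all (fun p : F * seq nat => n <= count (fun i => i < k) p.2)%N a'.

Lemma Edeg0_ge_eq n a b : a =E b -> Edeg0_ge n a -> Edeg0_ge n b.
Proof. by move=> ab [a' aa' a'_n]; exists a' => // s; rewrite -ab. Qed.

Lemma Edeg0_ge0 a : Edeg0_ge 0 a.
Proof. by exists a => //; apply/allP. Qed.

Lemma Edeg0_ge_nil n : Edeg0_ge n [::].
Proof. by exists [::]. Qed.

Lemma Edeg0_geW m n a : (m <= n)%N -> Edeg0_ge n a -> Edeg0_ge m a.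
Proof.
move=> mn [a' aa' a'_n]; exists a' => //.
by apply/allP => p /(allP a'_n) /=; apply: leq_trans.
Qed.

Lemma Edeg0_geM m n a b : Edeg0_ge m a -> Edeg0_ge n b -> Edeg0_ge (m + n) (Emul a b).
Proof.
move=> [a' aa' a'_m] [b' bb' b'_n]; exists (Emul a' b').
  by move=> s; rewrite (Emul_eql _ aa') (Emul_eqr _ bb').
apply/allP => _ /allpairsPdep [p [q [pa' qb' ->]]] /=.
by rewrite count_cat leq_add // ?(allP a'_m p pa') ?(allP b'_n q qb').
Qed.

Lemma Edeg0_geD n a b : Edeg0_ge n a -> Edeg0_ge n b -> Edeg0_ge n (a ++ b).
Proof.
move=> [a' aa' a'_n] [b' bb' b'_n]; exists (a' ++ b'); last by rewrite all_cat a'_n.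
by move=> s; rewrite !Ecoef_cat aa' bb'.
Qed.

Lemma Edeg0_geZ n (r : F) a : Edeg0_ge n a -> Edeg0_ge n (Escale r a).
Proof.
move=> [a' aa' a'_n]; exists (Escale r a'); last by rewrite /Escale all_map.
by move=> s; rewrite !Ecoef_scale aa'.
Qed.

Lemma Edeg0_ge_Epart n e a : Edeg0_ge n a -> Edeg0_ge n (Epart e a).
Proof.
move=> [a' aa' a'_n]; exists (Epart e a'); first exact: Epart_eq.
by rewrite /Epart all_filter; apply/allP => p pa'; apply/implyP => _; apply: (allP a'_n).
Qed.

Lemma Edeg0_ge_coef n a :
  (forall s, Ecoef a s != 0 -> (n <= count (fun i => i < k) s)%N) -> Edeg0_ge n a.
Proof.
move=> a_n; exists (Enormal a); first exact: Enormal_eq.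
by rewrite all_map; apply/allP => t; rewrite mem_filter => /andP [/a_n].
Qed.

(* A nonzero word has distinct letters, so at most k of them have index < k. *)
Lemma Edeg0_ge_Ezero n a : (k < n)%N -> Edeg0_ge n a -> Ezero a.
Proof.
move=> kn [a' aa' a'_n] s; rewrite aa'; apply: big1_seq => p /andP [_ pa'].
rewrite /wsign; case: ifP => [p_uniq|]; last by rewrite mulr0 mul0r.
have := leq_trans kn (allP a'_n p pa').
by rewrite ltnNge count_lt_uniq.
Qed.

Lemma Edeg0_ge_Ecomm m n a b : Edeg0_ge m (Epart true a) -> Edeg0_ge n (Epart true b) ->
  Edeg0_ge (m + n) (Ecomm a b).
Proof.
move=> a_m b_n; apply: Edeg0_ge_eq (fun s => esym (Ecomm_odd_parts a b s)) _.
exact/Edeg0_geZ/Edeg0_geM.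
Qed.

Lemma Edeg0_ge_comm_prod (v : nat -> Eexpr F) n :
  (forall i, Edeg0_ge 1 (Epart true (v i))) -> Edeg0_ge (2 * n) (comm_prod v n).
Proof.
move=> v_deg0; rewrite /comm_prod -[in (2 * n)%N](size_iota 0 n).
elim: (iota 0 n) => [|i L IHL] /=; first exact: Edeg0_ge0.
by rewrite mulnS; apply: Edeg0_geM IHL; apply: (@Edeg0_ge_Ecomm 1 1).
Qed.

End Degree0Generators.

Fixpoint bitseqs n : seq bitseq :=
  if n is n'.+1 then [seq true :: b | b <- bitseqs n'] ++ [seq false :: b | b <- bitseqs n']
  else [:: [::]].

Lemma mem_bitseqs n b : (b \in bitseqs n) = (size b == n).
Proof.
elim: n b => [|n IHn] [|x b] //=; rewrite mem_cat.
  by apply/negP => /orP [] /mapP [].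
have consI (y : bool) : injective (cons y) by move=> ? ? [].
have cons_notin y : (x :: b \in [seq y :: c | c <- bitseqs n]) = (x == y) && (b \in bitseqs n).
  case: eqP => [->|xy]; first by rewrite (mem_map (consI y)).
  by apply/negbTE/mapP => [[c _ [/xy]]].
by rewrite !cons_notin IHn eqSS; case: (x); rewrite ?orbF.
Qed.

Lemma bitseqs_uniq n : uniq (bitseqs n).
Proof.
elim: n => [|n IHn] //=.
have consI (y : bool) : injective (cons y) by move=> ? ? [].
rewrite cat_uniq !(map_inj_uniq (consI _)) IHn /= andbT.
by apply/hasPn => _ /mapP [c _ ->]; apply/mapP => [[d _ []]].
Qed.

Definition set_bits m (T : {set 'I_m}) : bitseq := [seq i \in T | i <- enum 'I_m].

Lemma nth_set_bits m (T : {set 'I_m}) (i : 'I_m) : nth false (set_bits T) i = (i \in T).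
Proof. by rewrite (nth_map i) ?size_enum_ord // nth_ord_enum. Qed.

Lemma size_set_bits m (T : {set 'I_m}) : size (set_bits T) = m.
Proof. by rewrite size_map size_enum_ord. Qed.

Lemma card_set_bits m (T : {set 'I_m}) : #|T| = count id (set_bits T).
Proof. by rewrite count_map cardE -size_filter /enum_mem filter_predT. Qed.

Lemma perm_set_bits m : perm_eq [seq set_bits T | T <- enum [set: {set 'I_m}]] (bitseqs m).
Proof.
apply: uniq_perm; last 1 first.
- move=> b; rewrite mem_bitseqs; apply/mapP/eqP => [[T _ ->]|b_m]; first exact: size_set_bits.
  exists [set i : 'I_m | nth false b i]; first by rewrite mem_enum inE.
  rewrite /set_bits -{1}(mkseq_nth false b) b_m /mkseq -val_enum_ord -map_comp.
  by apply: eq_map => i /=; rewrite inE.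
- rewrite map_inj_uniq ?enum_uniq // => T1 T2 T12.
  by apply/setP => i; rewrite -!nth_set_bits T12.
exact: bitseqs_uniq.
Qed.

Section GExpansion.
Variables (F : fieldType) (z : nat -> Eexpr F).

Definition gcoef n : F := ((-2) ^+ (n %/ 2))^-1.

(* f_T for the variables z_i, i in l, with T given by the bit sequence b over l *)
Definition fterm l b : Eexpr F :=
  Emul (Eprod (map z (mask (map negb b) l)))
       (Eprod [seq Ecomm (z p.1) (z p.2) | p <- pairup (mask b l)]).

Definition gsum l : Eexpr F :=
  Esum [seq Escale (gcoef (count id b)) (fterm l b)
       | b <- bitseqs (size l) & ~~ odd (count id b)].

(* the terms of gsum (j :: l) in which z_j lies in a commutator *)
Definition gsum_paired j l : Eexpr F :=
  Esum [seq Escale (gcoef (count id b).+1) (fterm (j :: l) (true :: b))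
       | b <- bitseqs (size l) & odd (count id b)].

Lemma Ecoef_Esum_filter (T : Type) (L : seq T) (P : pred T) (f : T -> Eexpr F) s :
  Ecoef (Esum [seq f b | b <- L & P b]) s = \sum_(b <- L | P b) Ecoef (f b) s.
Proof. by rewrite Ecoef_Esum big_map big_filter. Qed.

Lemma gsum_cons x l s :
  Ecoef (gsum (x :: l)) s = Ecoef (Emul (z x) (gsum l)) s + Ecoef (gsum_paired x l) s.
Proof.
rewrite /gsum /gsum_paired /= Ecoef_Esum_filter big_cat !big_map /= addrC.
congr (_ + _); last by rewrite Ecoef_Esum_filter; apply: eq_big => b; rewrite ?negbK.
rewrite Emul_Esumr big_map big_filter; apply: eq_big => // b _.
by rewrite !Ecoef_scale EmulZr /fterm /= EmulA.
Qed.

Lemma gsum_paired_cons j x l s :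
  Ecoef (gsum_paired j (x :: l)) s = Ecoef (Emul (z x) (gsum_paired j l)) s +
    (-2)^-1 * Ecoef (Emul (Ecomm (z j) (z x)) (gsum l)) s.
Proof.
rewrite /gsum /gsum_paired /= Ecoef_Esum_filter big_cat !big_map /= addrC.
congr (_ + _).
  rewrite Emul_Esumr big_map big_filter; apply: eq_big => // b _.
  by rewrite !Ecoef_scale EmulZr /fterm /= EmulA.
rewrite Emul_Esumr big_map big_filter big_distrr; apply: eq_big => // b _.
have gcoefSS n : gcoef n.+2 = (-2)^-1 * gcoef n.
  by rewrite /gcoef (_ : n.+2 %/ 2 = (n %/ 2).+1)%N ?exprS ?invfM //; lia.
rewrite !Ecoef_scale EmulZr gcoefSS /fterm /=.
rewrite -EmulA (Emul_eql _ (fun t => esym (Ecomm_central _ _ _ t))) EmulA; ring.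
Qed.

Definition prod_even l := Eprod [seq Epart false (z i) | i <- l].

(* the sum over i of the products in which only the i-th factor is odd *)
Fixpoint prod_one_odd l : Eexpr F :=
  if l is x :: l' then
    Emul (Epart false (z x)) (prod_one_odd l') ++ Emul (Epart true (z x)) (prod_even l')
  else [::].

Hypothesis two_neq0 : (2 : F) != 0.

Lemma gsum_even_odd l :
  gsum l =E prod_even l ++ prod_one_odd l /\
  forall j, gsum_paired j l =E Escale (-1) (Emul (Epart true (z j)) (prod_one_odd l)).
Proof.
elim: l => [|x l [IHg IHp]].
  split => [s|j s]; first by rewrite /gsum /= /gcoef expr0 invr1 !mul1r.
  rewrite /gsum_paired /= Ecoef_scale Ecoef_nil Ecoef_Emul big1 ?mulr0 // => p _.
  by rewrite big_nil.
split => [s|j s].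
  rewrite gsum_cons (Emul_eqr _ IHg) (EmulDr (z x)) IHp Ecoef_scale.
  rewrite !(Emul_eql _ (Epart_split (z x))) !EmulDl /prod_even /= -/(prod_even l).
  by rewrite !Ecoef_cat; ring.
rewrite gsum_paired_cons (Emul_eqr _ (IHp j)) EmulZr.
rewrite (Emul_eql _ (Epart_split (z x))) EmulDl.
rewrite (EmulCA_even _ _ (Epure_Epart false _)).
rewrite (EmulCA_odd _ _ (Epure_Epart true _) (Epure_Epart true _)).
rewrite (Emul_eql _ (Ecomm_odd_parts (z j) (z x))) EmulZl (Emul_eqr _ IHg) EmulDr !EmulA.
rewrite Ecoef_scale /= EmulDr mulrA.
have -> : (-2 : F)^-1 * 2 = -1 by rewrite invrN mulNr mulVf.
ring.
Qed.

Lemma fT_fterm m (T : {set 'I_m}) : fT T z = fterm (iota 0 m) (set_bits T).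
Proof. by rewrite /fT /fterm /set_bits !filter_mask !map_mask val_enum_ord -map_comp. Qed.

Lemma gpoly_gsum m : m != 1%N -> gpoly m z =E gsum (iota 0 m).
Proof.
move=> m_neq1 s; rewrite /gpoly (negbTE m_neq1) /gsum size_iota !Ecoef_Esum_filter.
rewrite -(perm_big _ (perm_set_bits m)) big_map big_mkcond [RHS]big_mkcond /=.
by apply: eq_bigr => T _; rewrite -card_set_bits fT_fterm.
Qed.

Variable k : nat.
Hypothesis even_parts_deg0 : forall i, Edeg0_ge k 1 (Epart false (z i)).

Lemma Edeg0_ge_prod_even l : Edeg0_ge k (size l) (prod_even l).
Proof.
elim: l => [|x l IHl] /=; first exact: Edeg0_ge0.
by rewrite -add1n; apply: Edeg0_geM.
Qed.

Lemma Edeg0_ge_prod_one_odd l : Edeg0_ge k (size l).-1 (prod_one_odd l).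
Proof.
elim: l => [|x l IHl] /=; first exact: Edeg0_ge_nil.
apply: Edeg0_geD; last by rewrite -[size l]add0n; apply/Edeg0_geM/Edeg0_ge_prod_even/Edeg0_ge0.
by apply: Edeg0_geW (Edeg0_geM (even_parts_deg0 x) IHl); case: (size l).
Qed.

Lemma Edeg0_ge_gpoly m : Edeg0_ge k m.-1 (gpoly m z).
Proof.
have [-> | m_neq1] := eqVneq m 1%N; first exact: Edeg0_ge0.
apply: Edeg0_ge_eq (fun s => esym (gpoly_gsum m_neq1 s)) _.
apply: Edeg0_ge_eq (fun s => esym ((gsum_even_odd _).1 s)) _.
apply: Edeg0_geD; last by have := Edeg0_ge_prod_one_odd (iota 0 m); rewrite size_iota.
by apply: Edeg0_geW (Edeg0_ge_prod_even _); rewrite size_iota leq_pred.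
Qed.

End GExpansion.

Section Identities.
Variables (F : fieldType) (k : nat) (u : nat -> Eexpr F).
Hypothesis odd_parts_deg0 : forall i, Edeg0_ge k 1 (Epart true (u i)).

Lemma comm_prod_Ecomm_Ezero x : ~~ odd k -> Ezero (Emul (comm_prod u k./2) (Ecomm (u k) x)).
Proof.
move=> k_even; apply: (Edeg0_ge_Ezero _ (Edeg0_geM
  (Edeg0_ge_comm_prod _ odd_parts_deg0)
  (Edeg0_ge_Ecomm (odd_parts_deg0 k) (Edeg0_ge0 _ _)))).
have := odd_double_half k; rewrite (negbTE k_even) add0n -muln2; lia.
Qed.

Lemma comm_prod_Ezero : odd k -> Ezero (comm_prod u k.+1./2).
Proof.
move=> k_odd; apply: (Edeg0_ge_Ezero _ (Edeg0_ge_comm_prod _ odd_parts_deg0)).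
have := odd_double_half k.+1; rewrite /= k_odd add0n -muln2; lia.
Qed.

Variables (z : nat -> Eexpr F) (l : nat).
Hypotheses (two_neq0 : (2 : F) != 0) (l_le_k : (l <= k)%N).
Hypothesis even_parts_deg0 : forall i, Edeg0_ge k 1 (Epart false (z i)).

Let gpoly_deg0 : Edeg0_ge k (k - l + 2).-1 (gpoly (k - l + 2) z) :=
  Edeg0_ge_gpoly two_neq0 even_parts_deg0 _.

Lemma gpoly_comm_prod_Ezero :
  ~~ odd l -> Ezero (Emul (gpoly (k - l + 2) z) (comm_prod u l./2)).
Proof.
move=> l_even; apply: (Edeg0_ge_Ezero _
  (Edeg0_geM gpoly_deg0 (Edeg0_ge_comm_prod _ odd_parts_deg0))).
have := odd_double_half l; rewrite (negbTE l_even) add0n -muln2; lia.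
Qed.

Lemma Ecomm_gpoly_comm_prod_Ezero : odd l ->
  Ezero (Emul (Ecomm (gpoly (k - l + 2) z) (u 0%N)) (comm_prod (fun i => u i.+1) l./2)).
Proof.
move=> l_odd; apply: (Edeg0_ge_Ezero _ (Edeg0_geM
  (Edeg0_ge_Ecomm (Edeg0_ge_Epart true gpoly_deg0) (odd_parts_deg0 0))
  (Edeg0_ge_comm_prod _ (fun i => odd_parts_deg0 i.+1)))).
have := odd_double_half l; rewrite l_odd -muln2; lia.
Qed.

Lemma gpoly_Ecomm_comm_prod_Ezero : odd l ->
  Ezero (Emul (Emul (gpoly (k - l + 2) z) (Ecomm (z (k - l + 2)%N) (u 0%N)))
              (comm_prod (fun i => u i.+1) l./2)).
Proof.
move=> l_odd; apply: (Edeg0_ge_Ezero _ (Edeg0_geM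
  (Edeg0_geM gpoly_deg0 (Edeg0_ge_Ecomm (Edeg0_ge0 _ _) (odd_parts_deg0 0)))
  (Edeg0_ge_comm_prod _ (fun i => odd_parts_deg0 i.+1)))).
have := odd_double_half l; rewrite l_odd -muln2; lia.
Qed.

End Identities.

Section Homogeneous.
Variables (F : fieldType) (k : nat).
Implicit Type a : Eexpr F.

Lemma Ehomog_neg_Ezero (d : int) a : d < 0 -> Ehomog k d a -> Ezero a.
Proof. by move=> d_lt0 a_d s; apply: contraTeq d_lt0 => /a_d <-. Qed.

Lemma Edeg0_ge_Epart_homog (d : nat) e a :
  Ehomog k d%:Z a -> odd d != e -> Edeg0_ge k 1 (Epart e a).
Proof.
move=> a_d d_Ne; apply: Edeg0_ge_coef => s; rewrite Ecoef_Epart.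
case: ifP => [/eqP s_e|_]; last by rewrite eqxx.
move=> /a_d /eqP; rewrite eqz_nat => /eqP s_d.
have size_s : (count (fun i => i < k) s + d)%N = size s.
  rewrite -s_d -(count_predC (fun i => i < k)%N); congr addn.
  by apply: eq_count => i; rewrite /= -leqNgt.
by rewrite lt0n; apply: contra_neq d_Ne => count0; rewrite -s_e -size_s count0.
Qed.

End Homogeneous.

Theorem mainTheorem13 (F : fieldType) (k : nat) :
  [pchar F] =i pred0 -> (0 < k)%N ->
  (* (1) x with alpha(x) < 0 *)
  (forall (d : int) (a : Eexpr F), d < 0 -> Ehomog k d a -> Ezero a) /\
  (* (2) [x1,x2,x3] for all degrees *)
  (forall (d1 d2 d3 : int) (a1 a2 a3 : Eexpr F),
      Ehomog k d1 a1 -> Ehomog k d2 a2 -> Ehomog k d3 a3 ->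
      Ezero (Ecomm (Ecomm a1 a2) a3)) /\
  (* (3) k even: [y1,y2]...[y_(k-1),y_k][y_(k+1),x] *)
  (~~ odd k -> forall (y : nat -> Eexpr F) (d : int) (x : Eexpr F),
      (forall i, Ehomog k 0 (y i)) -> Ehomog k d x ->
      Ezero (Emul (comm_prod y k./2) (Ecomm (y k) x))) /\
  (* (4) k odd: [y1,y2]...[y_k,y_(k+1)] *)
  (odd k -> forall (y : nat -> Eexpr F),
      (forall i, Ehomog k 0 (y i)) ->
      Ezero (comm_prod y k.+1./2)) /\
  (* (5) even l <= k *)
  (forall (l : nat), ~~ odd l -> (l <= k)%N ->
   forall (dz du : nat -> nat) (z u : nat -> Eexpr F),
      (forall i, odd (dz i)) -> (forall i, ~~ odd (du i)) ->
      (forall i, Ehomog k (dz i)%:Z (z i)) -> (forall i, Ehomog k (du i)%:Z (u i)) ->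
      Ezero (Emul (gpoly (k - l + 2) z) (comm_prod u l./2))) /\
  (* (6) odd l <= k *)
  (forall (l : nat), odd l -> (l <= k)%N ->
   forall (dz du : nat -> nat) (z u : nat -> Eexpr F),
      (forall i, odd (dz i)) -> (forall i, ~~ odd (du i)) ->
      (forall i, Ehomog k (dz i)%:Z (z i)) -> (forall i, Ehomog k (du i)%:Z (u i)) ->
      Ezero (Emul (Ecomm (gpoly (k - l + 2) z) (u 0%N))
                  (comm_prod (fun i => u i.+1) l./2))) /\
  (* (7) odd l <= k *)
  (forall (l : nat), odd l -> (l <= k)%N ->
   forall (dz du : nat -> nat) (z u : nat -> Eexpr F),
      (forall i, odd (dz i)) -> (forall i, ~~ odd (du i)) ->
      (forall i, Ehomog k (dz i)%:Z (z i)) -> (forall i, Ehomog k (du i)%:Z (u i)) ->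
      Ezero (Emul (Emul (gpoly (k - l + 2) z) (Ecomm (z (k - l + 2)%N) (u 0%N)))
                  (comm_prod (fun i => u i.+1) l./2))).
Proof.
(* the argument also covers k = 0 *)
move=> char0 _.
have two_neq0 : (2 : F) != 0 by rewrite (pcharf0P F).1.
have odd_parts_deg0 du u : (forall i, ~~ odd (du i)) ->
    (forall i, Ehomog k (du i)%:Z (u i)) -> forall i, Edeg0_ge k 1 (Epart true (u i)).
  by move=> du_even u_du i; apply: (Edeg0_ge_Epart_homog (u_du i)); rewrite (negbTE (du_even i)).
have even_parts_deg0 dz z : (forall i, odd (dz i)) ->
    (forall i, Ehomog k (dz i)%:Z (z i)) -> forall i, Edeg0_ge k 1 (Epart false (z i)).
  by move=> dz_odd z_dz i; apply: (Edeg0_ge_Epart_homog (z_dz i)); rewrite dz_odd.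
have y_deg0 y : (forall i, Ehomog k 0 (y i)) -> forall i, Edeg0_ge k 1 (Epart true (y i)).
  by move=> y0 i; apply: (Edeg0_ge_Epart_homog (d := 0%N) (y0 i)).
split; first exact: Ehomog_neg_Ezero.
split; first by move=> *; apply: Ecomm_Ecomm_Ezero.
split; first by move=> k_even y d x /y_deg0 y1 _; apply: comm_prod_Ecomm_Ezero.
split; first by move=> k_odd y /y_deg0 y1; apply: comm_prod_Ezero.
split.
  move=> l l_even l_le_k dz du z u /even_parts_deg0 dz_odd /odd_parts_deg0 du_even.
  by move=> /dz_odd z1 /du_even u1; apply: gpoly_comm_prod_Ezero.
split.
  move=> l l_odd l_le_k dz du z u /even_parts_deg0 dz_odd /odd_parts_deg0 du_even.
  by move=> /dz_odd z1 /du_even u1; apply: Ecomm_gpoly_comm_prod_Ezero.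
move=> l l_odd l_le_k dz du z u /even_parts_deg0 dz_odd /odd_parts_deg0 du_even.
by move=> /dz_odd z1 /du_even u1; apply: gpoly_Ecomm_comm_prod_Ezero.
Qed.
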